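(* Let $\mathbb X$ be a basic space and $\mathcal D=(D,<,\rho)$ a computable partially ordered set. The classes $\mathrm{Max}_{\mathrm{Rec}}[\mathbb X\to\mathcal D]$ and $\mathrm{Max}_{\mathrm{PR}}[\mathbb X\to\mathcal D]$ contain the same total functions: $\mathrm{Max}_{\mathrm{PR}}[\mathbb X\to\mathcal D]\cap D^{\mathbb X}=\mathrm{Max}_{\mathrm{Rec}}[\mathbb X\to\mathcal D]\cap D^{\mathbb X}$.
   Context: A basic space is a finite non-empty product of sets each of which is $\mathbb N$, $\mathbb Z$, or $A^*$ for some finite alphabet $A$. A computable partially ordered set is a triple $\mathcal D=(D,<,\rho)$ where $\rho:\mathbb N\to D$ is a bijection and $<$ is a strict partial order on $D$ with $\{(m,n):\rho(m)<\rho(n)\}$ computable; a partial function into $D$ is partial (resp. total) computable if its composition with $\rho^{-1}$ is. For a partial $f:\mathbb X\times\mathbb N\to D$ monotone increasing in its second argument on its domain, $\max^{\mathcal D}f$ is the partial function defined exactly at those $x$ for which $\{f(x,t):t,\ f(x,t)\text{ defined}\}$ is finite and non-empty, with value its maximum. $\mathrm{Max}_{\mathrm{PR}}[\mathbb X\to\mathcal D]$ (resp. $\mathrm{Max}_{\mathrm{Rec}}[\mathbb X\to\mathcal D]$) is the class of all $\max^{\mathcal D}f$ with $f$ partial computable (resp. total computable) and monotone increasing in its second argument. $D^{\mathbb X}$ is the set of total functions $\mathbb X\to D$. *)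

From mathcomp Require Import all_boot.
From mathcomp Require Import ssrint.

Set Implicit Arguments.
Unset Strict Implicit.
Unset Printing Implicit Defensive.

Inductive prf : nat -> Type :=
| prZero n : prf n
| prSucc : prf 1
| prProj n (i : 'I_n) : prf n
| prComp m n (f : prf m) (gs : seq (prf n)) : prf n
| prPrec n (g : prf n) (h : prf n.+2) : prf n.+1
| prMu n (g : prf n.+1) : prf n.

Inductive peval : forall n, prf n -> seq nat -> nat -> Prop :=
| ev_zero n xs : @peval n (prZero n) xs 0
| ev_succ x : peval prSucc [:: x] x.+1
| ev_proj n (i : 'I_n) xs : size xs = n -> peval (prProj i) xs (nth 0 xs i)
| ev_comp m n (f : prf m) (gs : seq (prf n)) xs ys y :
    size gs = m -> pevals gs xs ys -> peval f ys y -> peval (prComp f gs) xs y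
| ev_prec0 n (g : prf n) (h : prf n.+2) xs y :
    peval g xs y -> peval (prPrec g h) (0 :: xs) y
| ev_precS n (g : prf n) (h : prf n.+2) k xs z y :
    peval (prPrec g h) (k :: xs) z -> peval h (k :: z :: xs) y ->
    peval (prPrec g h) (k.+1 :: xs) y
| ev_mu n (g : prf n.+1) xs k :
    peval g (k :: xs) 0 ->
    (forall j, j < k -> exists2 v, v != 0 & peval g (j :: xs) v) ->
    peval (prMu g) xs k
with pevals : forall n, seq (prf n) -> seq nat -> seq nat -> Prop :=
| evs_nil n xs : @pevals n [::] xs [::]
| evs_cons n (g : prf n) gs xs y ys :
    peval g xs y -> pevals gs xs ys -> pevals (g :: gs) xs (y :: ys).

(* Basic spaces: finite non-empty products of N, Z and A^* with A a    *)
(* finite alphabet (taken as 'I_k).  Each component is coded by a      *)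
(* standard bijection with N, and a basic space is coded               *)
(* componentwise into N^n.                                             *)

Inductive bkind : Type := BNat | BInt | BWord of nat.

Definition bcomp (c : bkind) : Type :=
  match c with BNat => nat | BInt => int | BWord k => seq 'I_k end.

Definition code_int (z : int) : nat :=
  match z with Posz n => n.*2 | Negz n => n.*2.+1 end.

(* bijective base-k numeration of words over 'I_k *)
Fixpoint code_word k (w : seq 'I_k) : nat :=
  match w with [::] => 0 | a :: w' => (nat_of_ord a).+1 + k * code_word w' end.

Definition code_comp (c : bkind) : bcomp c -> nat :=
  match c return bcomp c -> nat with
  | BNat => fun n => n
  | BInt => code_int
  | BWord k => @code_word k
  end.

Fixpoint bspace (bs : seq bkind) : Type :=
  match bs with [::] => unit | c :: bs' => (bcomp c * bspace bs')%type end.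

Fixpoint bcodes (bs : seq bkind) : bspace bs -> seq nat :=
  match bs return bspace bs -> seq nat with
  | [::] => fun _ => [::]
  | c :: bs' => fun x => code_comp x.1 :: bcodes x.2
  end.

Definition strict_porder (D : Type) (lt : D -> D -> Prop) : Prop :=
  (forall x, ~ lt x x) /\ (forall x y z, lt x y -> lt y z -> lt x z).

Definition computable_poset (D : Type) (lt : D -> D -> Prop) (rho : nat -> D) : Prop :=
  [/\ strict_porder lt, bijective rho &
      exists t : prf 2, forall m n,
        (lt (rho m) (rho n) -> peval t [:: m; n] 1) /\
        (~ lt (rho m) (rho n) -> peval t [:: m; n] 0)].

Definition leD (D : Type) (lt : D -> D -> Prop) (a b : D) : Prop := lt a b \/ a = b.

Fixpoint inl_ (D : Type) (e : D) (l : seq D) : Prop :=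
  match l with [::] => False | a :: l' => a = e \/ inl_ e l' end.

(* f : X x N -> D partial, represented curried with option values.
   It is partial computable iff rho^-1 o f is partial recursive. *)
Definition pcomp2 (bs : seq bkind) (D : Type) (rho : nat -> D)
  (f : bspace bs -> nat -> option D) : Prop :=
  exists t : prf (size bs).+1, forall x s n,
    peval t (rcons (bcodes x) s) n <-> f x s = Some (rho n).

Definition tcomp2 (bs : seq bkind) (D : Type) (rho : nat -> D)
  (f : bspace bs -> nat -> D) : Prop :=
  pcomp2 rho (fun x s => Some (f x s)).

Definition monotone2 (X D : Type) (lt : D -> D -> Prop) (f : X -> nat -> option D) : Prop :=
  forall x s s' d d', s <= s' -> f x s = Some d -> f x s' = Some d' -> leD lt d d'.

Definition maxD_at (X D : Type) (lt : D -> D -> Prop) (f : X -> nat -> option D)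
  (x : X) (d : D) : Prop :=
  (exists l : list D, forall e, (exists s, f x s = Some e) <-> inl_ e l) /\
  (exists s, f x s = Some d) /\
  (forall s e, f x s = Some e -> leD lt e d).

Definition in_MaxPR (bs : seq bkind) (D : Type) (lt : D -> D -> Prop) (rho : nat -> D)
  (F : bspace bs -> D) : Prop :=
  exists f : bspace bs -> nat -> option D,
    [/\ pcomp2 rho f, monotone2 lt f & forall x, maxD_at lt f x (F x)].

Definition in_MaxRec (bs : seq bkind) (D : Type) (lt : D -> D -> Prop) (rho : nat -> D)
  (F : bspace bs -> D) : Prop :=
  exists f : bspace bs -> nat -> D,
    [/\ tcomp2 rho f, monotone2 lt (fun x s => Some (f x s)) &
        forall x, maxD_at lt (fun x s => Some (f x s)) x (F x)].

(* Max_Rec is contained in Max_PR since a total computable f is partial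
   computable.  Conversely let f be partial computable with T computing it,
   and evaluate T with a clock bounding the length of its unbounded searches.
   At stage c, take the largest s <= c such that T converges on (x, s) within
   c steps; the value of f there is a total recursive function of (x, c) once
   c is past the first stage at which anything converges, and this first stage
   is found by a terminating search since f x is defined somewhere.  The stages
   only grow, so by monotonicity of f the resulting total approximation is
   monotone; it takes values of f only, and eventually dominates each value of
   f, so it has the same maximum. *)

From mathcomp Require Import all_boot zify.
From Stdlib Require Import Eqdep_dec PeanoNat Classical.
From Stdlib Require List.
Import List (Forall, Forall_nil, Forall_cons, Forall_app, Forall_impl).

Set Implicit Arguments.
Unset Strict Implicit.
Unset Printing Implicit Defensive.

Fixpoint prf_nested_ind (P : forall n, prf n -> Prop)
  (Hz : forall n, P n (prZero n)) (Hs : P 1 prSucc)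
  (Hp : forall n (i : 'I_n), P n (prProj i))
  (Hc : forall m n (f : prf m) (gs : seq (prf n)),
     P m f -> Forall (P n) gs -> P n (prComp f gs))
  (Hr : forall n (g : prf n) (h : prf n.+2), P n g -> P n.+2 h -> P n.+1 (prPrec g h))
  (Hm : forall n (g : prf n.+1), P n.+1 g -> P n (prMu g))
  n (t : prf n) {struct t} : P n t :=
  let IH := prf_nested_ind Hz Hs Hp Hc Hr Hm in
  match t with
  | prZero n => Hz n
  | prSucc => Hs
  | prProj n i => Hp n i
  | prComp m n f gs => Hc m n f gs (IH _ f)
      ((fix go (gs : seq (prf n)) : Forall (P n) gs :=
         if gs is g :: gs' then Forall_cons g (IH _ g) (go gs') else Forall_nil _) gs)
  | prPrec n g h => Hr n g h (IH _ g) (IH _ h)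
  | prMu n g => Hm n g (IH _ g)
  end.

Ltac inj_pairs := repeat match goal with H : existT _ _ _ = existT _ _ _ |- _ =>
  apply (inj_pair2_eq_dec _ Nat.eq_dec) in H end; subst.
Ltac invert H := inversion H; clear H; subst; inj_pairs.
Ltac split_Forall := do ![apply: Forall_nil | apply: Forall_cons].

(** * Evaluation with a clock *)

Fixpoint oseq A (F : A -> option nat) (l : seq A) : option (seq nat) :=
  if l is a :: l' then
    if (F a, oseq F l') is (Some y, Some ys) then Some (y :: ys) else None
  else Some [::].

Fixpoint prec_iter (G H : seq nat -> option nat) (xs : seq nat) (k : nat) : option nat :=
  if k is k'.+1 then
    if prec_iter G H xs k' is Some z then H (k' :: z :: xs) else None
  else G xs.

(* [mu_search G r] scans [G 0], ..., [G r.-1]: it is [k.+2] if [k] is the first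
   zero, [1] if some [G j] is undefined before that, and [0] if the scan
   completed without meeting either. *)
Fixpoint mu_search (G : nat -> option nat) (r : nat) : nat :=
  if r is r'.+1 then
    if mu_search G r' != 0 then mu_search G r' else
    if G r' is Some v then (if v == 0 then r'.+2 else 0) else 1
  else 0.

Definition mu_result (s : nat) : option nat := if s is k.+2 then Some k else None.

(* The clock [c] only bounds the length of the unbounded searches. *)
Fixpoint ceval n (t : prf n) (c : nat) (xs : seq nat) {struct t} : option nat :=
  match t with
  | prZero _ => Some 0
  | prSucc => if xs is [:: x] then Some x.+1 else None
  | prProj n i => if size xs == n then Some (nth 0 xs i) else None
  | prComp m n f gs =>
      if size gs == m then
        if oseq (fun g => ceval g c xs) gs is Some ys then ceval f c ys else None
      else None
  | prPrec n g h => if xs is k :: xs' then prec_iter (ceval g c) (ceval h c) xs' k else None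
  | prMu n g => mu_result (mu_search (fun j => ceval g c (j :: xs)) c)
  end.

Lemma mu_search_eq0 G r :
  mu_search G r = 0 <-> forall j, j < r -> exists v, G j = Some v.+1.
Proof.
elim: r => [|r IH] /=; first by split.
case: eqP => [E|E]; last first.
  split=> // H; case: E; apply/IH => j jr; exact: H (ltnW jr).
rewrite IH in E; case Gr: (G r) => [[|v]|] /=.
- by split=> // /(_ r (ltnSn r)) [v]; rewrite Gr.
- split=> // _ j; rewrite ltnS leq_eqVlt => /orP [/eqP -> | /E //]; by exists v.
- by split=> // /(_ r (ltnSn r)) [v]; rewrite Gr.
Qed.

Lemma mu_searchP G r k : mu_search G r = k.+2 <->
  [/\ k < r, G k = Some 0 & forall j, j < k -> exists v, G j = Some v.+1].
Proof.
elim: r => [|r IH] /=; first by split => // -[].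
have below_r j : j < r.+1 -> j = r \/ j < r by rewrite ltnS leq_eqVlt => /orP [/eqP|]; auto.
case: eqP => [/mu_search_eq0 E|E]; last first.
  split=> [/IH [kr Gk Hk] | [/below_r [kr|kr] Gk Hk]]; last by apply/IH.
    by split => //; exact: ltnW.
  by case: E; apply/mu_search_eq0 => j; rewrite -kr => /Hk.
have no_zero_below j : j < r -> G j <> Some 0 by move=> /E [v ->].
case Gr: (G r) => [[|v]|] /=; split=> [|[/below_r [kr|kr] Gk _]] //.
- by move=> [<-]; split.
- by rewrite kr.
- by case: (no_zero_below k).
- by move: Gr; rewrite -kr Gk.
- by case: (no_zero_below k).
- by move: Gr; rewrite -kr Gk.
- by case: (no_zero_below k).
Qed.

Lemma oseq_mono A (F F' : A -> option nat) l ys :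
  Forall (fun a => forall y, F a = Some y -> F' a = Some y) l ->
  oseq F l = Some ys -> oseq F' l = Some ys.
Proof.
move=> HF; elim: HF ys => //= a l' Ha _ IH ys.
case Fa: (F a) => [y|] //; case Fl: (oseq F l') => [zs|] // [<-].
by rewrite (Ha _ Fa) (IH _ Fl).
Qed.

Lemma prec_iter_mono G H G' H' xs k y :
  (forall zs y, G zs = Some y -> G' zs = Some y) ->
  (forall zs y, H zs = Some y -> H' zs = Some y) ->
  prec_iter G H xs k = Some y -> prec_iter G' H' xs k = Some y.
Proof.
move=> HG HH; elim: k y => [|k IH] y /=; first exact: HG.
case E: (prec_iter G H xs k) => [z|] //; rewrite (IH _ E); exact: HH.
Qed.

Lemma ceval_mono n (t : prf n) c c' xs y :
  c <= c' -> ceval t c xs = Some y -> ceval t c' xs = Some y.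
Proof.
move: c c' xs y; elim/prf_nested_ind: n / t => //.
- move=> m n f gs IHf IHgs c c' xs y cc /=.
  case: (size gs == m) => //; case E: oseq => [ys|] // Hf.
  rewrite (oseq_mono _ E); first exact: IHf Hf.
  by apply: Forall_impl IHgs => g Hg y'; apply: Hg.
- move=> n g h IHg IHh c c' [|k xs] y cc //=.
  by apply: prec_iter_mono => zs y'; [exact: IHg | exact: IHh].
- move=> n g IHg c c' xs y cc /=.
  case E: mu_search => [|[|k]] //= [<-].
  have [kc Gk Hj] := (mu_searchP _ _ _).1 E.
  suff /mu_searchP -> : [/\ k < c', ceval g c' (k :: xs) = Some 0 &
      forall j, j < k -> exists v, ceval g c' (j :: xs) = Some v.+1] by [].
  split; [exact: leq_trans kc cc | exact: IHg Gk |].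
  by move=> j /Hj [v Hv]; exists v; exact: IHg Hv.
Qed.

Lemma ceval_sound n (t : prf n) c xs y : ceval t c xs = Some y -> peval t xs y.
Proof.
move: xs y; elim/prf_nested_ind: n / t.
- by move=> n xs y [<-]; constructor.
- by move=> [|x []] y //= [<-]; constructor.
- by move=> n i xs y /=; case: eqP => // Hs [<-]; constructor.
- move=> m n f gs IHf IHgs xs y /=.
  case: eqP => // Hs; case E: oseq => [ys|] // Hf.
  apply: (ev_comp (ys := ys)) (IHf _ _ Hf) => //.
  elim: IHgs ys E {Hs Hf} => [|g gs' Hg _ IH] ys /=; first by move=> [<-]; constructor.
  case Eg: (ceval g c xs) => [z|] //; case Egs: oseq => [zs|] // [<-].
  by constructor; [exact: Hg | exact: IH].
- move=> n g h IHg IHh [|k xs] y //=.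
  elim: k y => [|k IH] y /=; first by move=> /IHg; constructor.
  case E: prec_iter => [z|] // /IHh; exact: ev_precS (IH _ E).
- move=> n g IHg xs y /=.
  case E: mu_search => [|[|k]] //= [<-].
  have [kc Gk Hj] := (mu_searchP _ _ _).1 E.
  constructor; first exact: IHg.
  by move=> j /Hj [v /IHg Hv]; exists v.+1.
Qed.

Definition eventually_ceval n (t : prf n) xs y :=
  exists c, forall c', c <= c' -> ceval t c' xs = Some y.

Lemma ceval_complete n (t : prf n) xs y : peval t xs y -> eventually_ceval t xs y.
Proof.
move: xs y; elim/prf_nested_ind: n / t.
- by move=> n xs y H; invert H; exists 0.
- by move=> xs y H; invert H; exists 0.
- by move=> n i xs y H; invert H; exists 0 => c' _ /=; rewrite eqxx.
- move=> m n f gs IHf IHgs xs y H; invert H.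
  match goal with Hf : peval f _ _, Hgs : pevals gs _ _ |- _ =>
    have [c1 Hc1] := IHf _ _ Hf; move: Hgs; clear Hf end => Hgs.
  suff [c2 Hc2] : exists c, forall c', c <= c' -> oseq (fun g => ceval g c' xs) gs = Some ys.
    exists (maxn c1 c2) => c' /=; rewrite geq_max eqxx => /andP [/Hc1 H1 /Hc2 ->].
    exact: H1.
  elim: IHgs ys Hgs {Hc1} => [|g gs' IHg _ IH] ys Hgs; invert Hgs; first by exists 0.
  match goal with Hg : peval g _ _, Hs : pevals gs' _ _ |- _ =>
    have [cg Hcg] := IHg _ _ Hg; have [cs Hcs] := IH _ Hs end.
  by exists (maxn cg cs) => c' /=; rewrite geq_max => /andP [/Hcg -> /Hcs ->].
- move=> n g h IHg IHh [|k xs] y H; first by invert H.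
  elim: k y H => [|k IHk] y H; invert H.
    match goal with Hg : peval g _ _ |- _ => have [c Hc] := IHg _ _ Hg end.
    by exists c => c' /Hc.
  match goal with Hp : peval (prPrec g h) _ _, Hh : peval h _ _ |- _ =>
    have [c1 Hc1] := IHk _ Hp; have [c2 Hc2] := IHh _ _ Hh end.
  by exists (maxn c1 c2) => c' /=; rewrite geq_max => /andP [/Hc1 /= -> /Hc2].
- move=> n g IHg xs y H; invert H.
  match goal with H0 : peval g _ 0, Hlt : forall j, _ |- _ =>
    have [c1 Hc1] := IHg _ _ H0; move: Hlt; clear H0 end => Hlt.
  have [c2 Hc2] : exists c, forall c', c <= c' ->
      forall j, j < y -> exists v, ceval g c' (j :: xs) = Some v.+1.
    elim: y Hlt {Hc1} => [|k IHk] Hlt; first by exists 0.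
    have [c2 Hc2] := IHk (fun j jk => Hlt j (ltnW jk)).
    have [[|v] // _ /IHg [c3 Hc3]] := Hlt k (ltnSn k).
    exists (maxn c2 c3) => c'; rewrite geq_max => /andP [/Hc2 H2 /Hc3 H3] j.
    by rewrite ltnS leq_eqVlt => /orP [/eqP -> | /H2]; first by exists v.
  exists (maxn (maxn c1 c2) y.+1) => c'.
  rewrite !geq_max => /andP [/andP [/Hc1 H1 /Hc2 H2] yc] /=.
  suff /mu_searchP -> : [/\ y < c', ceval g c' (y :: xs) = Some 0 &
      forall j, j < y -> exists v, ceval g c' (j :: xs) = Some v.+1] by [].
  by split.
Qed.

Lemma peval_det n (t : prf n) xs y y' : peval t xs y -> peval t xs y' -> y = y'.
Proof.
move=> /ceval_complete [c1 H1] /ceval_complete [c2 H2].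
by have := H1 _ (leq_maxl c1 c2); rewrite H2 ?leq_maxr // => -[].
Qed.

Definition recursive n (F : seq nat -> nat) :=
  exists t : prf n, forall xs, size xs = n -> peval t xs (F xs).

Lemma recursive_ext n F G :
  recursive n F -> (forall xs, size xs = n -> F xs = G xs) -> recursive n G.
Proof. by move=> [t Ht] FG; exists t => xs Hs; rewrite -FG //; exact: Ht. Qed.

Lemma recursive_nth n i : i < n -> recursive n (nth 0 ^~ i).
Proof. by move=> lt_in; exists (prProj (Ordinal lt_in)) => xs; exact: ev_proj. Qed.
Arguments recursive_nth {n} i.

Lemma recursive_seq n (Gs : seq (seq nat -> nat)) : Forall (recursive n) Gs ->
  exists2 ts : seq (prf n), size ts = size Gs &
    forall xs, size xs = n -> pevals ts xs [seq G xs | G <- Gs].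
Proof.
elim=> [|G Gs' [t Ht] _ [ts Hts Hev]]; first by exists [::] => // xs _; constructor.
by exists (t :: ts) => [|xs Hxs]; [rewrite /= Hts | constructor; auto].
Qed.

Lemma recursive_comp m n F (Gs : seq (seq nat -> nat)) :
  size Gs = m -> recursive m F -> Forall (recursive n) Gs ->
  recursive n (fun xs => F [seq G xs | G <- Gs]).
Proof.
move=> sizeGs [f Hf] /recursive_seq [ts Hts Hev].
exists (prComp f ts) => xs Hxs.
by apply: ev_comp (Hev _ Hxs) (Hf _ _); rewrite ?size_map ?Hts.
Qed.

Fixpoint precF (G H : seq nat -> nat) (xs : seq nat) (k : nat) : nat :=
  if k is k'.+1 then H (k' :: precF G H xs k' :: xs) else G xs.

Lemma recursive_prec n G H : recursive n G -> recursive n.+2 H ->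
  recursive n.+1 (fun xs => precF G H (behead xs) (head 0 xs)).
Proof.
move=> [g Hg] [h Hh]; exists (prPrec g h) => -[|k xs] //= [Hs].
elim: k => [|k IH] /=; first by constructor; apply: Hg.
by apply: ev_precS IH _; apply: Hh; rewrite /= Hs.
Qed.

Lemma recursive_succ n G : recursive n G -> recursive n (fun xs => (G xs).+1).
Proof.
have succ1 : recursive 1 (fun xs => (head 0 xs).+1).
  by exists prSucc => -[|x []] //= _; constructor.
by move=> HG; apply: (recursive_comp (Gs := [:: G])) succ1 _; do !constructor.
Qed.

Lemma recursive_const n k : recursive n (fun _ => k).
Proof.
elim: k => [|k]; last exact: recursive_succ.
by exists (prZero n) => xs _; constructor.
Qed.

Lemma recursive_pred n G : recursive n G -> recursive n (fun xs => (G xs).-1).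
Proof.
have pred1 : recursive 1 (fun xs => (head 0 xs).-1).
  apply: recursive_ext (recursive_prec (recursive_const 0 0) (recursive_nth 0 _)) _ => //.
  by move=> [|[]].
by move=> HG; apply: (recursive_comp (Gs := [:: G])) pred1 _; do !constructor.
Qed.

Lemma recursive_add n G1 G2 :
  recursive n G1 -> recursive n G2 -> recursive n (fun xs => G1 xs + G2 xs).
Proof.
have add2 : recursive 2 (fun xs => nth 0 xs 0 + nth 0 xs 1).
  have step : recursive 3 (fun xs => (nth 0 xs 1).+1) by exact/recursive_succ/recursive_nth.
  apply: recursive_ext (recursive_prec (recursive_nth 0 _) step) _ => // -[|k [|t []]] //= _.
  by elim: k => //= k ->.
by move=> H1 H2; apply: (recursive_comp (Gs := [:: G1; G2])) add2 _; do !constructor.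
Qed.

Lemma recursive_ifz n A B C : recursive n A -> recursive n B -> recursive n C ->
  recursive n (fun xs => if A xs == 0 then B xs else C xs).
Proof.
have ifz3 : recursive 3 (fun xs => if nth 0 xs 0 == 0 then nth 0 xs 1 else nth 0 xs 2).
  apply: recursive_ext (recursive_prec (recursive_nth 0 _) (recursive_nth 3 _)) _ => //.
  by move=> [|[|k] [|b [|d []]]].
by move=> HA HB HC; apply: (recursive_comp (Gs := [:: A; B; C])) ifz3 _; do !constructor.
Qed.

Lemma recursive_nths n d k : d + k <= n ->
  Forall (recursive n) [seq nth 0 ^~ i | i <- iota d k].
Proof.
elim: k d => [|k IH] d dk //=; constructor; first by apply: recursive_nth; lia.
by apply: IH; lia.
Qed.

Lemma map_nths (w : seq nat) d k : d + k <= size w ->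
  [seq G w | G <- [seq nth 0 ^~ i | i <- iota d k]] = take k (drop d w).
Proof. by move=> dk; rewrite -map_comp map_nth_iota //; lia. Qed.

Lemma recursive_subst d n F (Gs : seq (seq nat -> nat)) :
  recursive (size Gs + n) F -> Forall (recursive (d + n)) Gs ->
  recursive (d + n) (fun w => F ([seq G w | G <- Gs] ++ drop d w)).
Proof.
move=> HF HGs.
have HGsPs := proj2 (Forall_app _ _ _) (conj HGs (recursive_nths (leqnn (d + n)))).
apply: recursive_ext (recursive_comp _ HF HGsPs) _.
  by rewrite size_cat size_map size_iota.
move=> w sw; rewrite map_cat map_nths ?sw // take_oversize // size_drop sw; lia.
Qed.
Arguments recursive_subst d n {F} Gs.

Lemma peval_mu_comp N (Z G : seq nat -> nat) : recursive N.+1 Z -> recursive N.+2 G ->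
  exists T : prf N.+1, forall cs t p, size cs = N -> Z (p :: cs) = 0 ->
    (forall j, j < p -> Z (j :: cs) != 0) -> peval T (rcons cs t) (G (p :: t :: cs)).
Proof.
move=> [tZ HtZ] [tG HtG].
have [ps sizeps Hps] := recursive_seq (@recursive_nths N.+1 0 N (leqnSn N)).
rewrite size_map size_iota in sizeps.
exists (prComp tG (prComp (prMu tZ) ps :: prProj (ord_max : 'I_N.+1) :: ps)).
move=> cs t p scs Zp Zj.
have sw : size (rcons cs t) = N.+1 by rewrite size_rcons scs.
have ps_cs : pevals ps (rcons cs t) cs.
  have E : [seq G (rcons cs t) | G <- [seq nth 0 ^~ i | i <- iota 0 N]] = cs.
    by rewrite map_nths ?sw // drop0 -cats1 -scs take_size_cat.
  by have := Hps _ sw; rewrite E.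
apply: (ev_comp (ys := p :: t :: cs)); first by rewrite /= sizeps.
  constructor.
    apply: (ev_comp (ys := cs)) ps_cs _ => //; constructor.
      by rewrite -Zp; apply: HtZ; rewrite /= scs.
    by move=> j /Zj Zj'; exists (Z (j :: cs)) => //; apply: HtZ; rewrite /= scs.
  constructor => //.
  by have := ev_proj (ord_max : 'I_N.+1) sw; rewrite nth_rcons scs ltnn eqxx.
by apply: HtG; rewrite /= scs.
Qed.

(** * The clocked evaluator is total recursive *)

Definition ocode (o : option nat) : nat := if o is Some y then y.+1 else 0.

Definition cevalc n (t : prf n) (w : seq nat) : nat :=
  ocode (ceval t (head 0 w) (behead w)).

Lemma recursive_cevalc_comp m n (f : prf m) (gs : seq (prf n)) :
  recursive m.+1 (cevalc f) -> Forall (fun g => recursive n.+1 (cevalc g)) gs ->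
  recursive n.+1 (cevalc (prComp f gs)).
Proof.
move=> Rf Rgs; case: (size gs =P m) => sizegs; last first.
  by apply: recursive_ext (recursive_const _ 0) _ => w _; rewrite /cevalc /=; case: eqP.
pose inner w := cevalc f (head 0 w :: [seq (cevalc g w).-1 | g <- gs]).
have Rinner : recursive n.+1 inner.
  pose Gs := nth 0 ^~ 0 :: [seq (fun w => (cevalc g w).-1) | g <- gs].
  apply: recursive_ext (recursive_comp (Gs := Gs) _ Rf _) _.
  - by rewrite /= size_map sizegs.
  - constructor; first exact: recursive_nth.
    by elim: Rgs => //= g gs' Rg _ IH; constructor => //; exact: recursive_pred.
  - by move=> [|c xs] _; rewrite /inner /= -map_comp.
(* the value is [inner] once every [g] has converged, and undefined otherwise *)
pose guarded (l : seq (prf n)) w :=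
  foldr (fun g acc => if cevalc g w == 0 then 0 else acc) (inner w) l.
have Rguarded (l : seq (prf n)) :
    Forall (fun g => recursive n.+1 (cevalc g)) l -> recursive n.+1 (guarded l).
  elim=> [|g l' Rg _ IH]; first exact: Rinner.
  exact: recursive_ifz Rg (recursive_const _ 0) IH.
apply: recursive_ext (Rguarded _ Rgs) _ => -[|c xs] // _.
have guardedE (l : seq (prf n)) : guarded l (c :: xs) =
    if oseq (fun g => ceval g c xs) l is Some _ then inner (c :: xs) else 0.
  by elim: l => //= g l ->; rewrite /cevalc /=; case: (ceval g c xs) => //= y; case: oseq.
have oseqE (l : seq (prf n)) ys : oseq (fun g => ceval g c xs) l = Some ys ->
    ys = [seq (cevalc g (c :: xs)).-1 | g <- l].
  elim: l ys => [|g l IH] ys /=; first by case=> <-.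
  rewrite /cevalc /=; case: (ceval g c xs) => // y; case E: oseq => [zs|] // [<-].
  by rewrite (IH _ E).
rewrite guardedE /cevalc /= sizegs eqxx; case E: oseq => [ys|] //.
by rewrite /inner (oseqE _ _ E).
Qed.

Lemma recursive_cevalc_prec n (g : prf n) (h : prf n.+2) :
  recursive n.+1 (cevalc g) -> recursive n.+3 (cevalc h) ->
  recursive n.+2 (cevalc (prPrec g h)).
Proof.
move=> Rg Rh.
(* the step receives [k :: z :: c :: xs], where [z] codes the previous value *)
pose step w := if nth 0 w 1 == 0 then 0
  else cevalc h (nth 0 w 2 :: nth 0 w 0 :: (nth 0 w 1).-1 :: drop 3 w).
have Rstep : recursive n.+3 step.
  apply: recursive_ifz (recursive_nth 1 _) (recursive_const _ 0) _ => //.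
  apply: (recursive_subst 3 n [:: nth 0 ^~ 2; nth 0 ^~ 0; fun w => (nth 0 w 1).-1]) Rh _.
  by split_Forall; do ?apply: recursive_pred; exact: recursive_nth.
have R := recursive_subst 2 n [:: nth 0 ^~ 1; nth 0 ^~ 0] (recursive_prec Rg Rstep).
apply: recursive_ext (R _) _ => [|[|c [|k xs]]] //.
  by split_Forall; exact: recursive_nth.
move=> _; rewrite /cevalc /= drop0; elim: k => //= k ->.
by rewrite /step /cevalc /= drop0; case: prec_iter.
Qed.

Lemma recursive_cevalc_mu n (g : prf n.+1) :
  recursive n.+2 (cevalc g) -> recursive n.+1 (cevalc (prMu g)).
Proof.
move=> Rg.
(* [mu_search] by primitive recursion; the step receives [r :: z :: c :: xs] *)
pose v w := cevalc g (nth 0 w 2 :: nth 0 w 0 :: drop 3 w).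
have Rv : recursive n.+3 v.
  apply: (recursive_subst 3 n [:: nth 0 ^~ 2; nth 0 ^~ 0]) Rg _.
  by split_Forall; exact: recursive_nth.
pose step w := if nth 0 w 1 == 0 then
    (if v w == 0 then 1 else if (v w).-1 == 0 then (nth 0 w 0).+2 else 0)
  else nth 0 w 1.
have Rstep : recursive n.+3 step.
  apply: recursive_ifz (recursive_nth 1 _) _ (recursive_nth 1 _) => //.
  apply: (recursive_ifz Rv (recursive_const _ 1)).
  apply: recursive_ifz (recursive_pred Rv) _ (recursive_const _ 0).
  exact/recursive_succ/recursive_succ/recursive_nth.
have R := recursive_subst 1 n [:: nth 0 ^~ 0; nth 0 ^~ 0]
  (recursive_prec (recursive_const n.+1 0) Rstep).
apply: recursive_ext (recursive_pred (R _)) _ => [|[|c xs]] //.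
  by split_Forall; exact: recursive_nth.
move=> _; rewrite /cevalc /= drop0.
suff -> : forall r, precF (fun _ => 0) step (c :: xs) r =
    mu_search (fun j => ceval g c (j :: xs)) r by case: mu_search => [|[|k]].
elim=> //= r ->; rewrite /step /v /cevalc /= drop0.
by case: mu_search => [|z] //=; case: ceval => [[|y]|].
Qed.

Lemma recursive_cevalc n (t : prf n) : recursive n.+1 (cevalc t).
Proof.
elim/prf_nested_ind: n / t.
- by move=> n; apply: recursive_ext (recursive_const _ 1) _.
- apply: recursive_ext (recursive_succ (recursive_succ (@recursive_nth 2 1 _))) _ => //.
  by move=> [|c [|x []]].
- move=> n i; have lt_i1_n1 : i.+1 < n.+1 by rewrite ltnS.
  apply: recursive_ext (recursive_succ (recursive_nth _ lt_i1_n1)) _.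
  by move=> [|c xs] //= [sxs]; rewrite /cevalc /= sxs eqxx.
- exact: recursive_cevalc_comp.
- exact: recursive_cevalc_prec.
- exact: recursive_cevalc_mu.
Qed.

Section Stages.

Variables (N : nat) (tf : prf N.+1).

Definition trial c cs s := ocode (ceval tf c (rcons cs s)).

Fixpoint last_hit c cs r :=
  if r is r'.+1 then (if trial c cs r' == 0 then last_hit c cs r' else r') else 0.

Definition stage cs c := trial c cs (last_hit c cs c.+1).

Lemma last_hit_le c cs r : last_hit c cs r.+1 <= r.
Proof. by elim: r => [|r IH] /=; case: ifP => // _; apply: leq_trans IH _. Qed.

Lemma last_hitP c cs r : (exists2 s, s < r & trial c cs s != 0) ->
  trial c cs (last_hit c cs r) != 0 /\
  forall s, s < r -> trial c cs s != 0 -> s <= last_hit c cs r.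
Proof.
elim: r => [|r IH] [s sr hit] //=; case: ifP => [/eqP miss | /negbT hit_r]; last first.
  by split=> // s'; rewrite ltnS.
have below_r s' : s' < r.+1 -> trial c cs s' != 0 -> s' < r.
  by rewrite ltnS leq_eqVlt => /orP [/eqP -> | //]; rewrite miss.
have [IH1 IH2] := IH (ex_intro2 _ _ s (below_r _ sr hit) hit).
by split=> // s' /below_r H /[dup] /H; apply: IH2.
Qed.

Lemma trial_mono c c' cs s :
  c <= c' -> trial c cs s != 0 -> trial c' cs s = trial c cs s.
Proof.
by rewrite /trial => cc; case E: ceval => [y|] // _; rewrite (ceval_mono cc E).
Qed.

Lemma stage_mono cs c c' : c <= c' -> stage cs c != 0 ->
  stage cs c' != 0 /\ last_hit c cs c.+1 <= last_hit c' cs c'.+1.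
Proof.
move=> cc hit.
have hit' : trial c' cs (last_hit c cs c.+1) != 0 by rewrite (trial_mono cc hit).
have lt_c' : last_hit c cs c.+1 < c'.+1 by rewrite ltnS (leq_trans (last_hit_le _ _ _)).
have [-> max_hit] := last_hitP (ex_intro2 _ _ (last_hit c cs c.+1) lt_c' hit').
by split=> //; exact: max_hit.
Qed.

Lemma recursive_trial : recursive N.+2 (fun w => trial (nth 0 w 0) (drop 2 w) (nth 0 w 1)).
Proof.
pose Gs := nth 0 ^~ 0 :: rcons [seq nth 0 ^~ i | i <- iota 2 N] (nth 0 ^~ 1).
apply: recursive_ext (recursive_comp (Gs := Gs) _ (recursive_cevalc tf) _) _.
- by rewrite /= size_rcons size_map size_iota.
- constructor; first exact: recursive_nth.
  rewrite -cats1; apply/Forall_app; split; first by apply: recursive_nths; lia.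
  by constructor; [exact: recursive_nth | constructor].
- move=> [|c [|s cs]] // [scs]; rewrite /cevalc /trial /= map_rcons map_nths /=; last lia.
  by rewrite take_oversize ?drop0 // scs.
Qed.

Lemma recursive_last_hit :
  recursive N.+2 (fun w => last_hit (nth 0 w 1) (drop 2 w) (nth 0 w 0)).
Proof.
have step : recursive N.+3 (fun w =>
    if trial (nth 0 w 2) (drop 3 w) (nth 0 w 0) == 0 then nth 0 w 1 else nth 0 w 0).
  apply: recursive_ifz (recursive_nth 1 _) (recursive_nth 0 _) => //.
  have R := recursive_subst 3 N [:: nth 0 ^~ 2; nth 0 ^~ 0] recursive_trial.
  apply: recursive_ext (R _) _ => [|w _]; last by rewrite /= drop0.
  by split_Forall; exact: recursive_nth.
apply: recursive_ext (recursive_prec (recursive_const N.+1 0) step) _.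
by move=> [|r [|c cs]] // _ /=; elim: r => //= r ->.
Qed.

Lemma recursive_stage : recursive N.+1 (fun w => stage (behead w) (head 0 w)).
Proof.
pose hit w := last_hit (nth 0 w 0) (drop 1 w) (nth 0 w 0).+1.
have Rhit : recursive N.+1 hit.
  have R := recursive_subst 1 N [:: fun w => (nth 0 w 0).+1; nth 0 ^~ 0] recursive_last_hit.
  apply: recursive_ext (R _) _ => [|w _]; last by rewrite /= drop0.
  by split_Forall; do ?apply: recursive_succ;
    exact: recursive_nth.
have R := recursive_subst 1 N [:: nth 0 ^~ 0; hit] recursive_trial.
apply: recursive_ext (R _) _ => [|[|c cs] _] //; last by rewrite /= /hit /stage !drop0 drop1.
by split_Forall => //; exact: recursive_nth.
Qed.

End Stages.

Lemma leD_anti D (lt : D -> D -> Prop) a b :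
  strict_porder lt -> leD lt a b -> leD lt b a -> a = b.
Proof. by move=> [irr trans] [ab|//] [ba|//]; case: (irr a); exact: trans ab ba. Qed.

Lemma inl_filter D (P : D -> Prop) (L : seq D) :
  exists l, forall e, P e /\ inl_ e L <-> inl_ e l.
Proof.
elim: L => [|a L [l Hl]] /=; first by exists [::] => e; split => // -[].
case: (classic (P a)) => Pa; [exists (a :: l) | exists l] => e /=; rewrite -Hl.
  by split=> [[Pe [<-|]] | [<-|[Pe]]]; auto.
by split=> [[Pe [ae|]] | [Pe]]; [case: Pa; rewrite ae | auto | auto].
Qed.

Lemma maxD_at_cofinal X D (lt : D -> D -> Prop) (f g : X -> nat -> option D) x d :
  strict_porder lt ->
  (forall s e, g x s = Some e -> exists s', f x s' = Some e) ->
  (forall s e, f x s = Some e -> exists s' e', g x s' = Some e' /\ leD lt e e') ->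
  maxD_at lt f x d -> maxD_at lt g x d.
Proof.
move=> lt_order g_f f_g [[L HL] [[s fxs] f_le]].
have g_le s' e : g x s' = Some e -> leD lt e d by move=> /g_f [s'' /f_le].
split; [|split] => //.
  have [l Hl] := inl_filter (fun e => exists s, g x s = Some e) L.
  exists l => e; rewrite -Hl; split=> [[s' gs'] | [] //]; split; first by exists s'.
  by have [s'' fs''] := g_f _ _ gs'; apply/HL; exists s''.
have [s' [e' [gs' le_de']]] := f_g _ _ fxs.
by exists s'; rewrite gs' (leD_anti lt_order le_de' (g_le _ _ gs')).
Qed.

(** * From partial to total approximations *)

Lemma size_bcodes bs (x : bspace bs) : size (bcodes x) = size bs.
Proof. by elim: bs x => //= c bs IH [a x] /=; rewrite IH. Qed.

Section PartialToTotal.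

Variables (bs : seq bkind) (D : Type) (lt : D -> D -> Prop) (rho : nat -> D).
Variables (f : bspace bs -> nat -> option D) (tf : prf (size bs).+1).

Hypothesis rho_bij : bijective rho.
Hypothesis tf_f : forall x s n, peval tf (rcons (bcodes x) s) n <-> f x s = Some (rho n).
Hypothesis f_mono : monotone2 lt f.
Hypothesis f_some : forall x, exists s d, f x s = Some d.

Local Notation trial_at x c := (trial tf c (bcodes x)).
Local Notation stage_at x := (stage tf (bcodes x)).
Local Notation hit_at x c := (last_hit tf c (bcodes x) c.+1).

Lemma trial_sound (x : bspace bs) c s :
  trial_at x c s != 0 -> f x s = Some (rho (trial_at x c s).-1).
Proof.
rewrite /trial; case E: ceval => [y|] //= _.
by apply/tf_f; exact: ceval_sound E.
Qed.

Lemma trial_complete (x : bspace bs) s d : f x s = Some d ->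
  exists c0, forall c, c0 <= c -> trial_at x c s != 0.
Proof.
have [rinv _ rinvK] := rho_bij.
rewrite -[d]rinvK => /tf_f /ceval_complete [c0 Hc0].
by exists c0 => c /Hc0; rewrite /trial => ->.
Qed.

Lemma stage_exists (x : bspace bs) : exists c, stage_at x c != 0.
Proof.
have [s [d /trial_complete [c0 Hc0]]] := f_some x.
have lt_s : s < (c0 + s).+1 by rewrite ltnS leq_addl.
have [hit _] := last_hitP (ex_intro2 _ _ s lt_s (Hc0 _ (leq_addr s c0))).
by exists (c0 + s).
Qed.

Definition first_stage (x : bspace bs) := ex_minn (stage_exists x).

Lemma first_stageP (x : bspace bs) :
  stage_at x (first_stage x) != 0 /\ forall c, c < first_stage x -> stage_at x c = 0.
Proof.
rewrite /first_stage; case: ex_minnP => p hit p_min; split=> // c lt_cp.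
by apply/eqP/negPn/negP => /p_min; rewrite leqNgt lt_cp.
Qed.

(* the [t]-th total approximation: the value of [f] at the latest argument
   converging within [first_stage x + t] steps *)
Definition approx (x : bspace bs) t := rho (stage_at x (first_stage x + t)).-1.

Lemma stage_approx (x : bspace bs) t : stage_at x (first_stage x + t) != 0.
Proof. exact: (stage_mono (leq_addr t _) (proj1 (first_stageP x))).1. Qed.

Lemma f_approx (x : bspace bs) t : f x (hit_at x (first_stage x + t)) = Some (approx x t).
Proof. exact: trial_sound (stage_approx x t). Qed.

Lemma approx_mono : monotone2 lt (fun x t => Some (approx x t)).
Proof.
move=> x t t' _ _ le_tt' [<-] [<-].
have le_stages : first_stage x + t <= first_stage x + t' by rewrite leq_add2l.
have [_ le_hit] := stage_mono le_stages (stage_approx x t).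
exact: f_mono le_hit (f_approx x t) (f_approx x t').
Qed.

Lemma approx_cofinal (x : bspace bs) s d :
  f x s = Some d -> exists t, leD lt d (approx x t).
Proof.
move=> fxs; have [c0 Hc0] := trial_complete fxs.
exists (c0 + s); set c := first_stage x + (c0 + s).
have hit_s : trial_at x c s != 0 by apply: Hc0; rewrite /c addnCA leq_addr.
have lt_s : s < c.+1 by rewrite ltnS /c addnA leq_addl.
have [_ max_hit] := last_hitP (ex_intro2 _ _ s lt_s hit_s).
exact: f_mono (max_hit _ lt_s hit_s) fxs (f_approx x _).
Qed.

Lemma tcomp2_approx : tcomp2 rho approx.
Proof.
pose Z w := if stage tf (behead w) (head 0 w) == 0 then 1 else 0.
pose G w := (stage tf (drop 2 w) (nth 0 w 0 + nth 0 w 1)).-1.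
have RZ : recursive (size bs).+1 Z.
  exact: recursive_ifz (recursive_stage tf) (recursive_const _ 1) (recursive_const _ 0).
have RG : recursive (size bs).+2 G.
  apply: recursive_pred.
  have R := recursive_subst 2 (size bs) [:: fun w => nth 0 w 0 + nth 0 w 1]
    (recursive_stage tf).
  apply: recursive_ext (R _) _ => [|w _] //.
  by split_Forall; apply: recursive_add; exact: recursive_nth.
have [T HT] := peval_mu_comp RZ RG.
have T_approx x s : peval T (rcons (bcodes x) s) (stage_at x (first_stage x + s)).-1.
  have [hit miss] := first_stageP x.
  have := HT _ s _ (size_bcodes x); rewrite /G /= drop0; apply.
    by rewrite /Z /= (negbTE hit).
  by move=> j /miss; rewrite /Z /= => ->.
exists T => x s n; split=> [/(peval_det (T_approx x s)) <- // | [/(bij_inj rho_bij) <-]].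
exact: T_approx.
Qed.

End PartialToTotal.

Theorem mainTheorem11 (bs : seq bkind) (Hbs : bs <> [::])
  (D : Type) (lt : D -> D -> Prop) (rho : nat -> D)
  (HD : computable_poset lt rho) (F : bspace bs -> D) :
  in_MaxPR lt rho F <-> in_MaxRec lt rho F.
Proof.
have [lt_order rho_bij _] := HD.
split=> [[f [[tf tf_f] f_mono f_max]] | [f [tcomp_f f_mono f_max]]]; last first.
  by exists (fun x s => Some (f x s)).
have f_some x : exists s d, f x s = Some d.
  by have [_ [[s fs] _]] := f_max x; exists s, (F x).
exists (approx rho_bij tf_f f_some); split.
- exact: tcomp2_approx.
- exact: approx_mono.
- move=> x; apply: maxD_at_cofinal lt_order _ _ (f_max x) => [s e [<-] | s e fxs].
    by eexists; exact: f_approx.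
  have [t le_et] := approx_cofinal rho_bij tf_f f_mono f_some fxs.
  by exists t, (approx rho_bij tf_f f_some x t).
Qed.
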